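(* Let $a,n$ be positive integers and $Y=\mathrm{key}((a^n))$ (the rectangular tableau with $n$ rows whose $i$-th row consists of $a$ copies of $i$). Let $u$ and $v$ be words in the alphabet $[n]$ with contents $\alpha$ and $\beta$ respectively. The following are equivalent: (1) $vu\sim_K\mathrm{word}(Y)$; (2) $\alpha$ is a partition, $\alpha+\beta=(a^n)$, $u\sim_K\mathrm{word}(\mathrm{key}(\alpha))$ and $v\sim_K\mathrm{word}(\mathrm{key}(\beta))$.
   Context: $\sim_K$ is Knuth equivalence of words. Tableaux are in English notation; column-strict means rows weakly increase and columns strictly increase; $\mathrm{word}(T)=\dotsb u^2u^1$ where $u^i$ is the $i$-th row read left to right. The content of a word in $[n]$ is the vector $(c_1,\dots,c_n)$ with $c_i$ the number of letters $i$. For a composition $\gamma=(\gamma_1,\dots,\gamma_n)$ of nonnegative integers, let $\gamma^+$ be its decreasing rearrangement; the key tableau $\mathrm{key}(\gamma)$ is the unique column-strict tableau of shape $\gamma^+$ and content $\gamma$; explicitly its $j$-th column consists of the letters $i$ with $\gamma_i\ge j$. *)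

From mathcomp Require Import all_boot.
From Stdlib Require Import Relations.Relation_Operators.
Set Implicit Arguments. Unset Strict Implicit. Unset Printing Implicit Defensive.

Definition word_on (n : nat) (w : seq nat) : bool := all (fun x => 0 < x <= n) w.

Inductive knuth_step : seq nat -> seq nat -> Prop :=
| knuth_K1 (p q : seq nat) (x y z : nat) :
    x < y -> y <= z ->
    knuth_step (p ++ [:: y; z; x] ++ q) (p ++ [:: y; x; z] ++ q)
| knuth_K2 (p q : seq nat) (x y z : nat) :
    x <= y -> y < z ->
    knuth_step (p ++ [:: x; z; y] ++ q) (p ++ [:: z; x; y] ++ q).

Definition knuth_equiv : seq nat -> seq nat -> Prop :=
  clos_refl_sym_trans (seq nat) knuth_step.

Definition content (n : nat) (w : seq nat) : seq nat :=
  [seq count_mem i w | i <- iota 1 n].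

Definition is_partition (gamma : seq nat) : bool := sorted geq gamma.

(* Tableaux (English notation) as the list of their rows, top row first. *)
Definition tableau := seq (seq nat).

Definition tword (T : tableau) : seq nat := flatten (rev T).

(* Key tableau of gamma: its j-th column (j >= 1), read top to bottom,
   consists of the letters i (1 <= i <= n, increasing) with gamma_i >= j. *)
Definition key_col (gamma : seq nat) (j : nat) : seq nat :=
  [seq i <- iota 1 (size gamma) | j <= nth 0 gamma i.-1].

Definition key_ncols (gamma : seq nat) : nat := foldr maxn 0 gamma.

Definition key_row (gamma : seq nat) (r : nat) : seq nat :=
  [seq nth 0 (key_col gamma j) r |
     j <- [seq j <- iota 1 (key_ncols gamma) | r < size (key_col gamma j)]].

Definition key (gamma : seq nat) : tableau :=
  [seq key_row gamma r | r <- iota 0 (size (key_col gamma 1))].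

Example key_ex : key [:: 1; 0; 3] = [:: [:: 1; 3; 3]; [:: 3]]. Proof. by []. Qed.
Example key_rect : tword (key [:: 2; 2]) = [:: 2; 2; 1; 1]. Proof. by []. Qed.

(* A word is Yamanouchi when each of its suffixes contains at least as many
   letters i as letters i+1.  This property is invariant under Knuth moves, and
   two Yamanouchi words with the same content are Knuth equivalent: moving
   letters across columns that contain them, each is equivalent to the column
   word of the conjugate of its content.  Since word(key(alpha)) is Yamanouchi
   for a partition alpha, a word u whose content alpha is a partition satisfies
   u ~ word(key(alpha)) iff u is Yamanouchi.  Dually, the reverse-complement v^#
   preserves Knuth equivalence, so for a weakly increasing content beta,
   v ~ word(key(beta)) iff v^# is Yamanouchi.  When vu has content (a^n), the
   counts in a suffix of vu are a minus those in the complementary prefix of v;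
   hence vu is Yamanouchi iff u and v^# are, and then the content of u is a
   partition and that of v is its complement in the rectangle. *)

From mathcomp Require Import all_boot zify.
From Stdlib Require Import Relations.Relation_Operators.
Set Implicit Arguments. Unset Strict Implicit. Unset Printing Implicit Defensive.

Lemma knuth_refl w : knuth_equiv w w.
Proof. exact: rst_refl. Qed.

Lemma knuth_sym w w' : knuth_equiv w w' -> knuth_equiv w' w.
Proof. exact: rst_sym. Qed.

Lemma knuth_trans w1 w2 w3 :
  knuth_equiv w1 w2 -> knuth_equiv w2 w3 -> knuth_equiv w1 w3.
Proof. exact: rst_trans. Qed.

Lemma knuth_step_equiv w w' : knuth_step w w' -> knuth_equiv w w'.
Proof. exact: rst_step. Qed.

Lemma knuth_step_cat p q w w' :
  knuth_step w w' -> knuth_step (p ++ w ++ q) (p ++ w' ++ q).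
Proof.
case=> p0 q0 x y z h1 h2.
  by have := knuth_K1 (p ++ p0) (q0 ++ q) h1 h2; rewrite -!catA.
by have := knuth_K2 (p ++ p0) (q0 ++ q) h1 h2; rewrite -!catA.
Qed.

Lemma knuth_cat p q w w' :
  knuth_equiv w w' -> knuth_equiv (p ++ w ++ q) (p ++ w' ++ q).
Proof.
elim=> [x y /(knuth_step_cat p q)/knuth_step_equiv //|x|x y _|x y z _ K1 _ K2].
- exact: knuth_refl.
- exact: knuth_sym.
- exact: knuth_trans K1 K2.
Qed.

Lemma knuth_catl p w w' : knuth_equiv w w' -> knuth_equiv (p ++ w) (p ++ w').
Proof. by move/(knuth_cat p [::]); rewrite !cats0. Qed.

Lemma knuth_catr q w w' : knuth_equiv w w' -> knuth_equiv (w ++ q) (w' ++ q).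
Proof. exact: knuth_cat [::] q w w'. Qed.

Lemma knuth_invariant (P : seq nat -> Prop) :
  (forall w w', knuth_step w w' -> P w <-> P w') ->
  forall w w', knuth_equiv w w' -> P w <-> P w'.
Proof.
move=> HP w w'; elim=> [x y /HP //|//|x y _ IH|x y z _ IH1 _ IH2].
  by split=> /IH.
by split=> [/IH1/IH2|/IH2/IH1].
Qed.

Lemma knuth_perm w w' : knuth_equiv w w' -> perm_eq w w'.
Proof.
elim=> [x y|x|x y _|x y z _ xy _ yz]; last exact: perm_trans xy yz.
- by case=> p q a b c _ _; rewrite perm_cat2l perm_cat2r; apply/permP => P /=; lia.
- exact: perm_refl.
- by rewrite perm_sym.
Qed.

Lemma knuth_count w w' x : knuth_equiv w w' -> count_mem x w = count_mem x w'.
Proof. by move/knuth_perm/permP. Qed.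

(** * Yamanouchi words *)

Definition ballot (w : seq nat) : Prop :=
  forall i, 0 < i -> count_mem i.+1 w <= count_mem i w.

Definition yamanouchi (w : seq nat) : Prop := forall m, ballot (drop m w).

Lemma ballot_perm w w' : perm_eq w w' -> ballot w <-> ballot w'.
Proof. by move/permP=> ww'; split=> B i /B; rewrite !ww'. Qed.

Lemma yamanouchi_cons x w : yamanouchi (x :: w) <-> ballot (x :: w) /\ yamanouchi w.
Proof.
split=> [Y|[B Y] [|m] //]; last exact: Y m.
by split=> [|m]; [exact: Y 0 | exact: Y m.+1].
Qed.

Lemma yamanouchi_catl p w w' : perm_eq w w' ->
  (yamanouchi w <-> yamanouchi w') -> (yamanouchi (p ++ w) <-> yamanouchi (p ++ w')).
Proof.
move=> ww' Yww'; elim: p => [//|x p IH] /=; rewrite !yamanouchi_cons.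
have pw : perm_eq (x :: p ++ w) (x :: p ++ w') by rewrite perm_cons perm_cat2l.
by split=> -[B Y]; split; by [apply/(ballot_perm pw) | apply/IH].
Qed.

Lemma yamanouchi_cat w u :
  yamanouchi (w ++ u) <-> (forall m, ballot (drop m w ++ u)) /\ yamanouchi u.
Proof.
split=> [Y|[B Y] m].
  split=> m; last by have := Y (size w + m); rewrite drop_cat ltnNge leq_addr addKn.
  have [lt_mw|le_wm] := ltnP m (size w); first by have := Y m; rewrite drop_cat lt_mw.
  by rewrite drop_oversize //; have := Y (size w); rewrite drop_size_cat.
rewrite drop_cat; case: ltnP => _; [exact: B | exact: Y].
Qed.

Lemma yamanouchi_knuth_step w w' : knuth_step w w' -> yamanouchi w <-> yamanouchi w'.
Proof.
(* Only the suffixes starting inside the three-letter window change, and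
   their ballot conditions are checked letter by letter. *)
case=> p q x y z h1 h2; (apply: yamanouchi_catl; first by apply/permP => P /=; lia);
  rewrite /= !yamanouchi_cons /ballot /=;
  by split=> -[B1 [B2 [B3 Y]]]; do ! split => //; move=> i i0;
    have := Y 0 i i0; rewrite drop0 /=;
    have := B1 i i0; have := B2 i i0; have := B3 i i0; lia.
Qed.

Lemma yamanouchi_knuth w w' : knuth_equiv w w' -> yamanouchi w <-> yamanouchi w'.
Proof. exact/knuth_invariant/yamanouchi_knuth_step. Qed.

(** * Column words: a normal form for Yamanouchi words *)

Lemma rev_iotaS lo k : rev (iota lo k.+1) = (lo + k) :: rev (iota lo k).
Proof. by rewrite -addn1 iotaD rev_cat. Qed.

Lemma knuth_pass_larger x k t :
  knuth_equiv (x :: rev (iota x.+1 k) ++ x :: t) (rev (iota x.+1 k) ++ [:: x, x & t]).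
Proof.
elim: k => [|k IH]; first exact: knuth_refl.
rewrite rev_iotaS /=; apply: knuth_trans (knuth_catl [:: x.+1 + k] IH).
have [y [t' [-> xy]]] : exists y t', rev (iota x.+1 k) ++ x :: t = y :: t' /\ x <= y < x.+1 + k.
  case: k {IH} => [|k]; first by exists x, t; split=> //; lia.
  by exists (x.+1 + k), (rev (iota x.+1 k) ++ x :: t); rewrite rev_iotaS; split=> //; lia.
by apply/knuth_step_equiv/(@knuth_K2 [::]); lia.
Qed.

Lemma knuth_pass_smaller x lo k p t : lo + k <= p <= x ->
  knuth_equiv (p :: x :: rev (iota lo k) ++ t) (p :: rev (iota lo k) ++ x :: t).
Proof.
elim: k p => [|k IH] p hp; first exact: knuth_refl.
rewrite rev_iotaS /=; apply: knuth_trans (knuth_catl [:: p] (IH (lo + k) _)); last lia.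
by apply/knuth_step_equiv/(@knuth_K1 [::]); lia.
Qed.

(* [rev (iota lo k)] is the reading word of the column [lo < ... < lo + k - 1]. *)
Lemma knuth_column_commute lo k x : lo <= x < lo + k ->
  knuth_equiv (x :: rev (iota lo k)) (rev (iota lo k) ++ [:: x]).
Proof.
move=> hx; have -> : iota lo k = iota lo (x - lo) ++ x :: iota x.+1 (lo + k - x).-1.
  have {1}-> : k = (x - lo) + (lo + k - x).-1.+1 by lia.
  by rewrite iotaD /=; congr (_ ++ _ :: iota _ _); lia.
rewrite rev_cat rev_cons -cats1 -!catA /=.
apply: knuth_trans (knuth_pass_larger _ _ _) _; apply: knuth_catl.
by have := @knuth_pass_smaller x lo (x - lo) x [::]; rewrite cats0; apply; lia.
Qed.

Definition colword (cs : seq nat) : seq nat :=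
  flatten [seq rev (iota 1 c) | c <- cs].

Lemma colword_cat A B : colword (A ++ B) = colword A ++ colword B.
Proof. by rewrite /colword map_cat flatten_cat. Qed.

Lemma colword_cons c A : colword (c :: A) = rev (iota 1 c) ++ colword A.
Proof. by []. Qed.

Lemma count_colword y cs : 0 < y -> count_mem y (colword cs) = count (leq y) cs.
Proof.
move=> y0; elim: cs => //= c cs IH.
by rewrite count_cat IH count_rev count_uniq_mem ?iota_uniq // mem_iota y0 add1n ltnS.
Qed.

Lemma knuth_colword_commute x A : 0 < x -> all (leq x) A ->
  knuth_equiv (x :: colword A) (colword A ++ [:: x]).
Proof.
move=> x0; elim: A => [|c A IH] /=; first by move=> _; exact: knuth_refl.
case/andP=> xc /IH /(knuth_catl (rev (iota 1 c))); rewrite -catA; apply: knuth_trans.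
by have := knuth_catr (colword A) (@knuth_column_commute 1 c x _); rewrite -catA; apply; lia.
Qed.

Lemma knuth_colword_grow x A B : all (leq x.+1) A ->
  knuth_equiv (x.+1 :: colword (A ++ x :: B)) (colword (A ++ x.+1 :: B)).
Proof.
move=> hA; rewrite !colword_cat !colword_cons rev_iotaS add1n -cat1s !catA.
by apply/knuth_catr; rewrite -[_ :: rev _]cat1s catA; apply/knuth_catr/knuth_colword_commute.
Qed.

Lemma geqn_trans : transitive geq.
Proof. by move=> y x z /= xy yz; apply: leq_trans xy. Qed.

Lemma count_leqS x (cs : seq nat) :
  count (leq x) cs = count_mem x cs + count (leq x.+1) cs.
Proof. by elim: cs => //= c cs ->; rewrite eq_sym; case: ltngtP; lia. Qed.

Lemma pairwise_geq_split x cs : pairwise geq cs -> x \in cs ->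
  exists A B, [/\ cs = A ++ x :: B, all (leq x.+1) A & all (geq x) B].
Proof.
elim: cs => //= c cs IH /andP [cP P]; rewrite inE.
have [-> _|xc /= xcs] := eqVneq x c; first by exists [::], cs; split.
have [A [B [Ecs hA hB]]] := IH P xcs; exists (c :: A), B; split; rewrite ?Ecs //=.
by rewrite hA andbT ltn_neqAle xc; exact: (allP cP x xcs).
Qed.

Lemma pairwise_geq_bump y A B : all (leq y.+1) A ->
  pairwise geq (A ++ y :: B) -> pairwise geq (A ++ y.+1 :: B).
Proof.
move=> hA; rewrite !pairwise_cat !allrel_consr /= => /and4P [/andP [_ ->] -> hB ->].
rewrite hA /= andbT (sub_all _ hB) // => c; exact: leqW.
Qed.

Lemma yamanouchi_colword w : 0 \notin w -> yamanouchi w ->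
  exists cs, [/\ pairwise geq cs, 0 \notin cs & knuth_equiv w (colword cs)].
Proof.
elim: w => [|x w IH]; first by exists [::]; split=> //; exact: knuth_refl.
rewrite inE negb_or eq_sym => /andP [x0 w0] /yamanouchi_cons [Bx Yw].
have [cs [Pcs cs0 Kw]] := IH w0 Yw.
have Kx : knuth_equiv (x :: w) (x :: colword cs) := knuth_catl [:: x] Kw.
have {}Bx : ballot (x :: colword cs) by apply/(ballot_perm (knuth_perm Kx)).
have cs1 : all (leq 1) cs by apply/allP => -[|c] // c0; case/negP: cs0.
(* The new letter [y.+1] is stacked on a column of height [y], which exists by
   the ballot condition; for [y = 0] it starts a new column. *)
case: x x0 Kx Bx => // y _ Kx Bx; case: (posnP y) => [y0|y0].
  subst y; exists (cs ++ [:: 1]); split.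
  - by rewrite pairwise_cat Pcs /= andbT; apply/allrelP => c d /(allP cs1) ? /[!inE] /eqP ->.
  - by rewrite mem_cat negb_or cs0.
  - apply: knuth_trans Kx _; have := @knuth_colword_grow 0 cs [::] cs1.
    by rewrite colword_cat /= cats0.
have ycs : y \in cs.
  have := Bx y y0; rewrite /= eqxx (gtn_eqF (ltnSn y)) !count_colword // (count_leqS y).
  by rewrite -has_pred1 has_count; lia.
have [A [B [Ecs hA hB]]] := pairwise_geq_split Pcs ycs.
exists (A ++ y.+1 :: B); split.
- by apply: pairwise_geq_bump; rewrite -?Ecs.
- by move: cs0; rewrite Ecs !mem_cat !inE /= !negb_or => /andP [-> /andP [_ ->]].
- by apply: knuth_trans Kx _; rewrite Ecs; apply: knuth_colword_grow.
Qed.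

Lemma colword_inj cs1 cs2 : pairwise geq cs1 -> pairwise geq cs2 ->
  0 \notin cs1 -> 0 \notin cs2 ->
  (forall y, 0 < y -> count_mem y (colword cs1) = count_mem y (colword cs2)) ->
  cs1 = cs2.
Proof.
move=> P1 P2 cs1_0 cs2_0 E.
have geq_anti : antisymmetric geq by move=> m n /andP [nm mn]; apply/anti_leq/andP.
apply: (pairwise_eq geq_anti P1 P2).
apply/allP => -[|y] _ /=; first by rewrite !(count_memPn _).
have := E y.+2 isT; have := E y.+1 isT; rewrite !count_colword // !(count_leqS y.+1).
by move=> + E2; rewrite E2 => /addIn ->.
Qed.

Lemma yamanouchi_knuth_equiv w1 w2 : 0 \notin w1 -> perm_eq w1 w2 ->
  yamanouchi w1 -> yamanouchi w2 -> knuth_equiv w1 w2.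
Proof.
move=> w1_0 w12 Y1 Y2; have w2_0 : 0 \notin w2 by rewrite -(perm_mem w12).
have [cs1 [P1 cs1_0 K1]] := yamanouchi_colword w1_0 Y1.
have [cs2 [P2 cs2_0 K2]] := yamanouchi_colword w2_0 Y2.
suff Ecs : cs1 = cs2 by apply: knuth_trans K1 _; rewrite Ecs; exact: knuth_sym.
apply: colword_inj => // y _.
by rewrite -(knuth_count _ K1) -(knuth_count _ K2); apply/permP.
Qed.

(** * The reverse-complement involution *)

Lemma word_on_knuth n w w' : knuth_equiv w w' -> word_on n w -> word_on n w'.
Proof. by rewrite /word_on => /knuth_perm/perm_all ->. Qed.

Lemma word_on_notin0 n w : word_on n w -> 0 \notin w.
Proof. by move/allP=> hw; apply/negP => /hw. Qed.

(* Schutzenberger's [w^#]: reverse [w] and replace each letter [i] of [[n]] by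
   [n + 1 - i]; it turns the relations K1 into K2 and vice versa. *)
Definition rev_compl (n : nat) (w : seq nat) : seq nat := rev (map (subn n.+1) w).

Section RevCompl.

Variable n : nat.

Lemma word_on_rev_compl w : word_on n w -> word_on n (rev_compl n w).
Proof. by rewrite /word_on all_rev all_map => /allP hw; apply/allP => x /hw /=; lia. Qed.

Lemma rev_complK w : word_on n w -> rev_compl n (rev_compl n w) = w.
Proof.
rewrite /rev_compl map_rev revK -map_comp => /allP hw.
by rewrite -[RHS]map_id; apply/eq_in_map => x /hw /=; lia.
Qed.

Lemma count_rev_compl w i : word_on n w -> 0 < i <= n ->
  count_mem i (rev_compl n w) = count_mem (n.+1 - i) w.
Proof.
move=> /allP hw hi; rewrite count_rev count_map.
by apply: eq_in_count => x /hw /= hx; apply/eqP/eqP; lia.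
Qed.

Lemma knuth_step_rev_compl w w' : knuth_step w w' -> word_on n w ->
  knuth_step (rev_compl n w') (rev_compl n w).
Proof.
rewrite /word_on /rev_compl => -[] p q x y z h1 h2;
  rewrite !all_cat => /and3P [_ /= hxyz _];
  rewrite !map_cat !rev_cat /= !rev_cons -!cats1 -!catA;
  [apply: knuth_K2 | apply: knuth_K1]; lia.
Qed.

Lemma knuth_rev_compl w w' : word_on n w -> knuth_equiv w w' ->
  knuth_equiv (rev_compl n w) (rev_compl n w').
Proof.
move=> + K; elim: K => [x y xy|x|x y K IH|x y z Kxy IH1 _ IH2] hx.
- exact/knuth_sym/knuth_step_equiv/(knuth_step_rev_compl xy hx).
- exact: knuth_refl.
- by apply/knuth_sym/IH; apply: word_on_knuth hx; exact: knuth_sym.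
- by apply: knuth_trans (IH1 hx) (IH2 (word_on_knuth Kxy hx)).
Qed.

Definition coballot (w : seq nat) : Prop :=
  forall i, 0 < i < n -> count_mem i w <= count_mem i.+1 w.

Lemma ballot_rev_compl w : word_on n w -> ballot (rev_compl n w) <-> coballot w.
Proof.
move=> hw; have E i : 0 < i < n ->
    count_mem (n - i).+1 (rev_compl n w) = count_mem i w /\
    count_mem (n - i) (rev_compl n w) = count_mem i.+1 w.
  case/andP=> i0 lt_in; rewrite !count_rev_compl //; [|lia..].
  by rewrite subSS subSn ?leq_subr // subKn // ltnW.
split=> B i hi.
  by have [<- <-] := E i hi; apply: B; rewrite subn_gt0; case/andP: hi.
case: (ltnP i n) => [lt_in|le_ni].
  have hni : 0 < n - i < n by lia.
  by rewrite -(subKn (ltnW lt_in)); have [-> ->] := E _ hni; apply: B.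
suff -> : count_mem i.+1 (rev_compl n w) = 0 by [].
by apply/count_memPn/negP => /(allP (word_on_rev_compl hw)) /=; lia.
Qed.

Lemma yamanouchi_rev_compl w : word_on n w ->
  yamanouchi (rev_compl n w) <-> forall m, coballot (take m w).
Proof.
move=> hw; have hwt m : word_on n (take m w).
  by move: hw; rewrite /word_on -{1}(cat_take_drop m w) all_cat => /andP [].
have drop_rc m : drop m (rev_compl n w) = rev_compl n (take (size w - m) w).
  by rewrite /rev_compl drop_rev size_map map_take.
split=> Y m; last by rewrite drop_rc ballot_rev_compl.
rewrite -ballot_rev_compl //; have := Y (size w - m); rewrite drop_rc.
case: (leqP m (size w)) => [le_mw|lt_wm]; first by rewrite subKn.
by rewrite (eqP (ltnW lt_wm)) subn0 take_size take_oversize // ltnW.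
Qed.

End RevCompl.

Lemma sorted_iota (r : rel nat) m k : (forall i, m <= i -> r i i.+1) -> sorted r (iota m k).
Proof.
elim: k m => [|[|k] IH] m h //=; rewrite h //=.
by apply: (IH m.+1) => i /ltnW; apply: h.
Qed.

Section Content.

Variable n : nat.

Lemma size_content w : size (content n w) = n.
Proof. by rewrite size_map size_iota. Qed.

Lemma nth_content w i : i < n -> nth 0 (content n w) i = count_mem i.+1 w.
Proof. by move=> i_n; rewrite (nth_map 0) ?size_iota // nth_iota // add1n. Qed.

Lemma content_perm w w' : perm_eq w w' -> content n w = content n w'.
Proof. by move/permP=> E; apply: eq_map => i; apply: E. Qed.

Lemma perm_content w w' : word_on n w -> word_on n w' ->
  content n w = content n w' -> perm_eq w w'.
Proof.
move=> /allP hw /allP hw' E; apply/allP => x _; apply/eqP.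
have [x_in|x_out] := boolP (0 < x <= n).
  by rewrite -(prednK (proj1 (andP x_in))) -!nth_content ?E //; lia.
by rewrite (count_memPn (contra (hw x) x_out)) (count_memPn (contra (hw' x) x_out)).
Qed.

Lemma content_cat u v :
  [seq x.1 + x.2 | x <- zip (content n u) (content n v)] = content n (u ++ v).
Proof. by rewrite zip_map -map_comp /content; apply: eq_map => i /=; rewrite count_cat. Qed.

Lemma content_nseq w a :
  content n w = nseq n a <-> forall i, 0 < i <= n -> count_mem i w = a.
Proof.
split=> [E i hi|C].
  case/andP: hi => i0 i_n; rewrite -(prednK i0) -nth_content ?E ?nth_nseq; last by rewrite prednK.
  by rewrite prednK ?i_n.
apply: (@eq_from_nth _ 0) => [|i]; rewrite size_content ?size_nseq // => i_n.
by rewrite nth_content // nth_nseq i_n C.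
Qed.

Lemma ballot_partition w : ballot w -> is_partition (content n w).
Proof.
by move=> B; rewrite /is_partition /content sorted_map; apply: sorted_iota => i /B.
Qed.

End Content.

Lemma nseq_partition n a : is_partition (nseq n a).
Proof. by elim: n => //= -[|n] //= ->; rewrite leqnn. Qed.

Lemma sorted_leq_complement (s t : seq nat) a : size s = size t ->
  [seq x.1 + x.2 | x <- zip s t] = nseq (size s) a -> sorted geq s -> sorted leq t.
Proof.
move=> st E; have -> : t = map (subn a) s.
  by elim: s t st E => [|x s IH] [|y t] //= [st] [xya /(IH _ st) ->]; rewrite -xya addKn.
by rewrite sorted_map; apply: sub_sorted => x y /= yx; apply: leq_sub2l.
Qed.

Lemma sorted_content_complement n u v a : is_partition (content n u) ->
  [seq x.1 + x.2 | x <- zip (content n u) (content n v)] = nseq n a ->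
  sorted leq (content n v).
Proof.
by move=> Pu S; apply: (sorted_leq_complement (a := a)) Pu; rewrite ?S !size_content.
Qed.

Section Rectangle.

Variables n a : nat.

Lemma ballot_rect p s : word_on n (p ++ s) ->
  (forall i, 0 < i <= n -> count_mem i (p ++ s) = a) -> ballot s <-> coballot n p.
Proof.
move=> hps C; have Cs i : 0 < i <= n -> count_mem i s + count_mem i p = a.
  by move=> hi; rewrite addnC -count_cat C.
split=> B i hi.
  by have := B i (proj1 (andP hi)); have := Cs i.+1; have := Cs i; lia.
case: (ltnP i n) => [lt_in|le_ni].
  by have := B i; have := Cs i.+1; have := Cs i; lia.
suff -> : count_mem i.+1 s = 0 by [].
apply/count_memPn/negP => si; move/allP: hps => /(_ i.+1).
by rewrite mem_cat si orbT => /(_ isT) /=; lia.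
Qed.

Lemma yamanouchi_cat_rect v u : word_on n (v ++ u) -> content n (v ++ u) = nseq n a ->
  yamanouchi (v ++ u) <-> yamanouchi u /\ yamanouchi (rev_compl n v).
Proof.
move=> hvu /content_nseq C.
have hv : word_on n v by move: hvu; rewrite /word_on all_cat => /andP [].
rewrite yamanouchi_cat yamanouchi_rev_compl //.
have R m : ballot (drop m v ++ u) <-> coballot n (take m v).
  by apply: ballot_rect; rewrite catA cat_take_drop.
by split=> -[B Y]; split=> // m; apply/R.
Qed.

End Rectangle.

Definition rows_word (f : nat -> seq nat) (k : nat) : seq nat :=
  tword [seq f r | r <- iota 0 k].

Lemma rows_wordS f k : rows_word f k.+1 = f k ++ rows_word f k.
Proof. by rewrite /rows_word /tword -addn1 iotaD map_cat rev_cat. Qed.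

Lemma rows_word_shift f k : rows_word f k.+1 = rows_word (f \o S) k ++ f 0.
Proof.
rewrite /rows_word /tword /= rev_cons -cats1 flatten_cat /= cats0.
by rewrite -[1]/(1 + 0) iotaDl -map_comp.
Qed.

Lemma count_drop_le (x : nat) s m : count_mem x (drop m s) <= count_mem x s.
Proof. by rewrite -{2}(cat_take_drop m s) count_cat leq_addl. Qed.

Lemma count_take_le (x : nat) s m : count_mem x (take m s) <= count_mem x s.
Proof. by rewrite -{2}(cat_take_drop m s) count_cat leq_addr. Qed.

Section RowsBallot.

Variable f : nat -> seq nat.
Hypothesis top_row : forall i, 0 < i -> count_mem i.+1 (f 0) = 0.
Hypothesis row_dominated :
  forall r i, 0 < i -> count_mem i.+1 (f r.+1) <= count_mem i (f r).

Lemma count_rows_wordS k i : 0 < i ->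
  count_mem i.+1 (rows_word f k.+1) <= count_mem i (rows_word f k).
Proof.
move=> i0; elim: k => [|k IH]; first by rewrite rows_wordS /rows_word /tword /= cats0 top_row.
by rewrite rows_wordS [in X in _ <= X]rows_wordS !count_cat leq_add ?row_dominated.
Qed.

Lemma yamanouchi_rows_word k : yamanouchi (rows_word f k).
Proof.
elim: k => [//|k IH m i i0].
rewrite rows_wordS drop_cat; case: ltnP => _; last exact: IH.
have le_drop := count_drop_le i.+1 (f k) m.
have := count_rows_wordS k i0; rewrite rows_wordS !count_cat => le_rows.
apply: leq_trans (leq_add le_drop (leqnn _)) (leq_trans le_rows (leq_addl _ _)).
Qed.

End RowsBallot.

Section RowsCoballot.

Variable n : nat.

Definition rows_coballot (f : nat -> seq nat) : Prop :=
  forall r i, 0 < i < n -> count_mem i (f r) <= count_mem i.+1 (f r.+1).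

Lemma count_rows_word_coballot f k : f k = [::] -> rows_coballot f ->
  forall i, 0 < i < n ->
  count_mem i (rows_word f k) + count_mem i.+1 (f 0) <= count_mem i.+1 (rows_word f k).
Proof.
elim: k f => [f -> //|k IH f fk fco i hi].
have := IH (f \o S) fk (fun r => fco r.+1) i hi; have := fco 0 i hi.
rewrite rows_word_shift !count_cat /=; lia.
Qed.

Lemma coballot_rows_word f k m : f k = [::] -> rows_coballot f ->
  coballot n (take m (rows_word f k)).
Proof.
elim: k f m => [//|k IH f m fk fco].
rewrite rows_word_shift take_cat; case: ltnP => [_|le_m].
  exact: IH (f \o S) m fk (fun r => fco r.+1).
move=> i hi; have := count_rows_word_coballot (f := f \o S) fk (fun r => fco r.+1) hi.
have := fco 0 i hi; have := count_take_le i (f 0) (m - size (rows_word (f \o S) k)).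
rewrite !count_cat /=; lia.
Qed.

End RowsCoballot.

(** * Key tableaux *)

Section KeyTableau.

Variable gs : seq nat.

Lemma mem_key_col j x :
  (x \in key_col gs j) = (0 < x <= size gs) && (j <= nth 0 gs x.-1).
Proof. by rewrite /key_col mem_filter mem_iota andbC; congr (_ && _); lia. Qed.

Lemma count_key_col j (x : nat) :
  count_mem x (key_col gs j) = (0 < x <= size gs) && (j <= nth 0 gs x.-1).
Proof. by rewrite count_uniq_mem ?filter_uniq ?iota_uniq ?mem_key_col. Qed.

Lemma size_key_col j : size (key_col gs j) <= size gs.
Proof. by rewrite size_filter (leq_trans (count_size _ _)) ?size_iota. Qed.

Lemma size_key_col_le j : 0 < j -> size (key_col gs j) <= size (key_col gs 1).
Proof. by move=> j0; rewrite !size_filter; apply: sub_count => i /=; lia. Qed.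

Lemma key_ncols_ge x : x \in gs -> x <= key_ncols gs.
Proof.
rewrite /key_ncols; elim: gs => //= g s IH; rewrite inE => /predU1P [->|/IH].
  exact: leq_maxl.
by move/leq_trans; apply; apply: leq_maxr.
Qed.

Lemma count_key_row r (x : nat) : count_mem x (key_row gs r) =
  count (fun j => (r < size (key_col gs j)) && (nth 0 (key_col gs j) r == x))
        (iota 1 (key_ncols gs)).
Proof. by rewrite count_map count_filter; apply: eq_count => j /=; rewrite andbC. Qed.

Lemma key_row_nrows : key_row gs (size (key_col gs 1)) = [::].
Proof.
rewrite /key_row (eq_in_filter (a2 := pred0)) ?filter_pred0 // => j.
by rewrite mem_iota => /andP [j0 _] /=; rewrite ltnNge size_key_col_le.
Qed.

Lemma tword_key : tword (key gs) = rows_word (key_row gs) (size (key_col gs 1)).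
Proof. by []. Qed.

Lemma count_nth_iota (s : seq nat) k (x : nat) : size s <= k ->
  count (fun r => (r < size s) && (nth 0 s r == x)) (iota 0 k) = count_mem x s.
Proof.
move=> sk; rewrite (eq_count (a2 := predI (fun r => nth 0 s r == x) (fun r => r < size s))).
  rewrite -count_filter -{1}(add0n (size s)) filter_iota_ltn //.
  by rewrite -[in RHS](take_size s) -(map_nth_iota0 0) // count_map.
by move=> r; rewrite /= andbC.
Qed.

Lemma count_tword_key_cols (x : nat) :
  count_mem x (tword (key gs)) = \sum_(j <- iota 1 (key_ncols gs)) count_mem x (key_col gs j).
Proof.
rewrite /tword /key count_flatten map_rev sumn_rev sumnE !big_map.
under eq_bigr => r _ do rewrite count_key_row -sum1_count big_mkcond /=.
rewrite exchange_big big_seq [RHS]big_seq; apply: eq_bigr => j; rewrite mem_iota => /andP [j0 _].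
by rewrite -(count_nth_iota _ (size_key_col_le j0)) -sum1_count [RHS]big_mkcond.
Qed.

Lemma count_tword_key (x : nat) :
  count_mem x (tword (key gs)) = if 0 < x <= size gs then nth 0 gs x.-1 else 0.
Proof.
rewrite count_tword_key_cols; under eq_bigr => j _ do rewrite count_key_col.
case: ifP => hx; last by rewrite big1.
rewrite (eq_bigr (fun j => if j <= nth 0 gs x.-1 then 1 else 0)) //.
rewrite -big_mkcond sum1_count -size_filter.
have ncols : nth 0 gs x.-1 <= key_ncols gs.
  by apply/key_ncols_ge/mem_nth; case/andP: hx => x0; rewrite prednK.
rewrite -[X in size X = _](@eq_filter _ (fun j => j < 1 + nth 0 gs x.-1)) => [|j].
  by rewrite filter_iota_ltn ?size_iota.
by rewrite add1n ltnS.
Qed.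

Lemma word_on_tword_key : word_on (size gs) (tword (key gs)).
Proof.
apply/allP => x; rewrite /tword => /flattenP [R]; rewrite mem_rev => /mapP [r _ ->].
rewrite /key_row => /mapP [j]; rewrite mem_filter => /andP [hr _] ->.
by have := mem_nth 0 hr; rewrite mem_key_col => /andP [].
Qed.

End KeyTableau.

Lemma key_col_cons g gs j :
  key_col (g :: gs) j = (if j <= g then [:: 1] else [::]) ++ map S (key_col gs j).
Proof.
rewrite /key_col /= -[2]/(1 + 1) iotaDl filter_map.
have -> : [seq 1 + i | i <- iota 1 (size gs)
                      & preim (addn 1) (fun i => j <= nth 0 (g :: gs) i.-1) i]
    = map S [seq i <- iota 1 (size gs) | j <= nth 0 gs i.-1].
  rewrite (eq_in_filter (a2 := fun i => j <= nth 0 gs i.-1)) => [|[|i] //].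
    by apply: eq_map => i; rewrite add1n.
  by rewrite mem_iota.
by case: (j <= g).
Qed.

Lemma key_col_nil gs j : all (gtn j) gs -> key_col gs j = [::].
Proof.
elim: gs => //= g gs IH /andP [gj /IH]; rewrite key_col_cons => ->.
by rewrite leqNgt gj.
Qed.

Lemma key_col_full gs j : all (leq j) gs -> key_col gs j = iota 1 (size gs).
Proof.
elim: gs => //= g gs IH /andP [jg /IH]; rewrite key_col_cons jg => ->.
by rewrite -[2]/(1 + 1) iotaDl; congr (_ :: _); apply: eq_map => i; rewrite add1n.
Qed.

Lemma key_col_partition gs j : sorted geq gs -> key_col gs j = iota 1 (size (key_col gs j)).
Proof.
rewrite sorted_pairwise; last exact: geqn_trans.
elim: gs => //= g gs IH /andP [gs_le_g /IH {}IH]; rewrite key_col_cons.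
case: (leqP j g) => jg /=.
  by rewrite size_map {1}IH -[2]/(1 + 1) iotaDl; congr (_ :: _).
by rewrite key_col_nil //; apply: sub_all gs_le_g => c /= /leq_ltn_trans; apply.
Qed.

Lemma key_col_antipartition gs j : sorted leq gs ->
  key_col gs j = iota ((size gs).+1 - size (key_col gs j)) (size (key_col gs j)).
Proof.
rewrite sorted_pairwise; last exact: leq_trans.
elim: gs => //= g gs IH /andP [g_le_gs /IH {}IH]; rewrite key_col_cons.
case: (leqP j g) => jg /=.
  rewrite key_col_full; last by apply: sub_all g_le_gs => c /= /(leq_trans jg).
  by rewrite size_map size_iota subSnn -[2]/(1 + 1) iotaDl.
rewrite size_map subSn ?(leqW (size_key_col gs j)) // -add1n iotaDl {1}IH.
by apply: eq_map => i; rewrite add1n.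
Qed.

Lemma count_key_row_partition gs r (x : nat) : sorted geq gs ->
  count_mem x (key_row gs r) =
  (x == r.+1) * count (fun j => r < size (key_col gs j)) (iota 1 (key_ncols gs)).
Proof.
move=> Pgs; rewrite count_key_row.
rewrite (eq_count (a2 := fun j => (r < size (key_col gs j)) && (x == r.+1))) => [|j].
  by case: (x == r.+1); rewrite ?mul1n ?mul0n; under eq_count do rewrite ?andbT ?andbF;
    rewrite ?count_pred0.
case: (ltnP r (size (key_col gs j))) => [hr|_] //=.
by rewrite (key_col_partition j Pgs) nth_iota -?(key_col_partition j Pgs).
Qed.

Lemma yamanouchi_tword_key gs : sorted geq gs -> yamanouchi (tword (key gs)).
Proof.
move=> Pgs; rewrite tword_key.
apply: yamanouchi_rows_word => [[//|i] _|r i _]; rewrite !count_key_row_partition //.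
rewrite eqSS; case: eqP; rewrite ?mul0n // !mul1n => _.
by apply: sub_count => j; exact: ltnW.
Qed.

Lemma coballot_tword_key gs m : sorted leq gs ->
  coballot (size gs) (take m (tword (key gs))).
Proof.
move=> Pgs; rewrite tword_key; apply: coballot_rows_word; first exact: key_row_nrows.
move=> r i hi; rewrite !count_key_row; apply: sub_count => j /andP [].
have := size_key_col gs j; rewrite (key_col_antipartition j Pgs) size_iota.
set c := size (key_col gs j) => le_c hr; rewrite nth_iota // => /eqP ri.
have hr1 : r.+1 < c by lia.
by rewrite hr1 nth_iota //=; apply/eqP; lia.
Qed.

Lemma content_tword_key gs : content (size gs) (tword (key gs)) = gs.
Proof.
apply: (@eq_from_nth _ 0) => [|i]; rewrite size_content // => i_gs.
by rewrite nth_content // count_tword_key /= i_gs.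
Qed.

Section KeyOfContent.

Variables (n : nat) (w : seq nat).
Hypothesis hw : word_on n w.

Let k := tword (key (content n w)).

Lemma word_on_key_content : word_on n k.
Proof. by have := word_on_tword_key (content n w); rewrite size_content. Qed.

Lemma perm_key_content : perm_eq w k.
Proof.
apply: perm_content hw word_on_key_content _.
by have := content_tword_key (content n w); rewrite size_content => ->.
Qed.

Lemma knuth_key_content_yamanouchi : is_partition (content n w) ->
  knuth_equiv w k <-> yamanouchi w.
Proof.
move=> Pw; have Yk := yamanouchi_tword_key Pw.
split=> [K|Y]; first exact/(yamanouchi_knuth K).
exact: yamanouchi_knuth_equiv (word_on_notin0 hw) perm_key_content Y Yk.
Qed.

Lemma knuth_key_content_rev_compl : sorted leq (content n w) ->
  knuth_equiv w k <-> yamanouchi (rev_compl n w).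
Proof.
move=> Pw; have hk := word_on_key_content.
have Yk : yamanouchi (rev_compl n k).
  by apply/yamanouchi_rev_compl => // m; have := coballot_tword_key m Pw; rewrite size_content.
split=> [K|Y]; first exact/(yamanouchi_knuth (knuth_rev_compl hw K)).
rewrite -(rev_complK hw) -(rev_complK hk); apply: knuth_rev_compl (word_on_rev_compl hw) _.
apply: yamanouchi_knuth_equiv Y Yk; first exact/word_on_notin0/word_on_rev_compl.
by rewrite /rev_compl perm_rev perm_sym perm_rev perm_sym perm_map ?perm_key_content.
Qed.

End KeyOfContent.

Unset Implicit Arguments.

Theorem proposition5p4 (a n : nat) (ha : 0 < a) (hn : 0 < n)
    (u v : seq nat) (hu : word_on n u) (hv : word_on n v) :
  knuth_equiv (v ++ u) (tword (key (nseq n a))) <->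
  [/\ is_partition (content n u),
      [seq x.1 + x.2 | x <- zip (content n u) (content n v)] = nseq n a,
      knuth_equiv u (tword (key (content n u)))
    & knuth_equiv v (tword (key (content n v)))].
Proof.
set Y := tword (key (nseq n a)).
have hvu : word_on n (v ++ u) by rewrite /word_on all_cat; apply/andP.
have hY : word_on n Y by have := word_on_tword_key (nseq n a); rewrite size_nseq.
have CY : content n Y = nseq n a by have := content_tword_key (nseq n a); rewrite size_nseq.
have YY : yamanouchi Y := yamanouchi_tword_key (nseq_partition n a).
have sum_rect : [seq x.1 + x.2 | x <- zip (content n u) (content n v)] = content n (v ++ u).
  by rewrite content_cat; apply: content_perm; rewrite perm_catC.
rewrite sum_rect; split=> [K|[Pu S Ku Kv]].
- have S : content n (v ++ u) = nseq n a by rewrite (content_perm _ (knuth_perm K)).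
  have [Yu Yv] := (yamanouchi_cat_rect hvu S).1 ((yamanouchi_knuth K).2 YY).
  have Pu : is_partition (content n u).
    by apply: ballot_partition; rewrite -[u]drop0; apply: Yu.
  have Pv := sorted_content_complement Pu (etrans sum_rect S).
  split=> //; first exact/(knuth_key_content_yamanouchi hu Pu).
  exact/(knuth_key_content_rev_compl hv Pv).
- have Pv := sorted_content_complement Pu (etrans sum_rect S).
  have Yu := (knuth_key_content_yamanouchi hu Pu).1 Ku.
  have Yv := (knuth_key_content_rev_compl hv Pv).1 Kv.
  apply: yamanouchi_knuth_equiv (word_on_notin0 hvu) _ _ YY.
    by apply: perm_content hvu hY _; rewrite S CY.
  by apply/(yamanouchi_cat_rect hvu S); split.
Qed.
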